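(* Let $\mathcal F=\{F^c_{t,k}\}$ be an F-system and $R,\lambda$ reals such that $|F^A_t\cup F^B_t|\le Rt+\lambda$ for every positive integer $t$. Then for every even positive integer $t$, $|Z_{3t,2t}|\ge|S_t\cup Z_{3t/2,t}|-(3R-4)t-\lambda$.
   Context: F-system: a family $\mathcal F=\{F^c_{t,k}\}$ of sets of positive integers, indexed by $c\in\{A,B\}$ and integers $0<k\le t$, such that (F1) $|F^c_{t,k}|\ge k$ for all $c,t,k$; and (F2) $F^A_{t,k}\cap F^B_{t',k'}=\emptyset$ for all $k\le t$, $k'\le t'$ with $k+k'\le\max(t,t')$. Notation: $F^c_t=\bigcup_{0<\kappa\le\tau\le t}F^c_{\tau,\kappa}$ for $c\in\{A,B\}$; $S_t=F^A_t\cap F^B_t$; for even $t$, $Z_{3t/2,t}=F^A_{3t/2,t}\cap F^B_{3t/2,t}$ (so also $Z_{3t,2t}=F^A_{3t,2t}\cap F^B_{3t,2t}$). *)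

From HB Require Import structures.
From mathcomp Require Import all_boot all_order all_algebra.
Set Implicit Arguments. Unset Strict Implicit. Unset Printing Implicit Defensive.
Import Order.TTheory GRing.Theory Num.Theory.

Inductive colour := cA | cB.

(* A Ffamily of sets of positive integers indexed by colour and (t,k):
   x belongs to F^c_{t,k} iff  F c t k x.  Only indices 0<k<=t are meaningful. *)
Definition Ffamily := colour -> nat -> nat -> nat -> Prop.

Definition has_at_least (k : nat) (P : nat -> Prop) : Prop :=
  exists s : seq nat, [/\ uniq s, k <= size s & forall x, x \in s -> P x].

Definition card_is (P : nat -> Prop) (n : nat) : Prop :=
  exists s : seq nat, [/\ uniq s, size s = n & forall x, P x <-> x \in s].

Definition valid_idx (t k : nat) : Prop := 0 < k <= t.

Definition is_Fsystem (F : Ffamily) : Prop :=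
  [/\ (forall c t k x, valid_idx t k -> F c t k x -> 0 < x),
      (forall c t k, valid_idx t k -> has_at_least k (F c t k)) &
      (forall t k t' k' x, valid_idx t k -> valid_idx t' k' ->
          k + k' <= maxn t t' -> ~ (F cA t k x /\ F cB t' k' x))].

(* F^c_t = union of F^c_{tau,kappa} over 0 < kappa <= tau <= t *)
Definition Fup (F : Ffamily) (c : colour) (t : nat) (x : nat) : Prop :=
  exists tau kappa, [/\ 0 < kappa, kappa <= tau, tau <= t & F c tau kappa x].

Definition Sset (F : Ffamily) (t : nat) (x : nat) : Prop :=
  Fup F cA t x /\ Fup F cB t x.

Definition Zset (F : Ffamily) (t k : nat) (x : nat) : Prop :=
  F cA t k x /\ F cB t k x.

From HB Require Import structures.
From mathcomp Require Import all_boot all_order all_algebra.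
From mathcomp Require Import zify lra.
From Stdlib Require Import ClassicalEpsilon.
Import Order.TTheory GRing.Theory Num.Theory.
Set Implicit Arguments. Unset Strict Implicit. Unset Printing Implicit Defensive.

(* Fix an even t > 0 and let U = F^A_{3t} ∪ F^B_{3t}, a finite
   set with |U| <= 3Rt + lambda by hypothesis.  Inside U lie
     A = F^A_{3t,2t} and B = F^B_{3t,2t}, each with at least 2t elements
     (axiom F1), whose intersection is Z_{3t,2t}, and
     X = S_t ∪ Z_{3t/2,t}, which is disjoint from A ∪ B by axiom F2
     (every element of X lies in some F^c_{tau,kappa} with kappa + 2t <= 3t).
   Hence |X| + |A| + |B| <= |U| + |A ∩ B|, i.e.
     |X| + 4t <= 3Rt + lambda + |Z_{3t,2t}|, which is the claim.
   Evenness of t only makes 3t/2 an integer; with floor division the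
   argument needs just t <= 3t/2 <= 3t. *)

Definition decide (P : nat -> Prop) (x : nat) : bool :=
  if excluded_middle_informative (P x) then true else false.

Lemma decideP (P : nat -> Prop) x : reflect (P x) (decide P x).
Proof. by rewrite /decide; case: excluded_middle_informative => h; constructor. Qed.

Lemma card_is_count (U : seq nat) (P : nat -> Prop) :
  uniq U -> (forall x, P x -> x \in U) -> card_is P (count (decide P) U).
Proof.
move=> uU PU; exists (filter (decide P) U); split.
- exact: filter_uniq.
- by rewrite size_filter.
- move=> x; rewrite mem_filter; split.
  + by move=> Px; rewrite (PU _ Px) andbT; apply/decideP.
  + by case/andP => /decideP.
Qed.

Lemma has_at_least_count (U : seq nat) (P : nat -> Prop) k :
  has_at_least k P -> (forall x, P x -> x \in U) -> k <= count (decide P) U.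
Proof.
case=> s [us ks Ps] PU; apply: (leq_trans ks); rewrite -size_filter.
apply: uniq_leq_size => // x xs; rewrite mem_filter (PU _ (Ps _ xs)) andbT.
exact/decideP/Ps.
Qed.

Lemma count_disjoint_union (T : Type) (a b x : pred T) (s : seq T) :
  (forall y, x y -> ~~ (a y || b y)) ->
  count x s + count a s + count b s <= size s + count (predI a b) s.
Proof.
move=> disj.
have abx : count (predI (predU a b) x) s = 0.
  rewrite (eq_count (a2 := pred0)) ?count_pred0 // => y /=.
  by apply/andP => -[aby /disj]; rewrite aby.
have := count_predUI a b s; have := count_predUI (predU a b) x s.
have := count_size (predU (predU a b) x) s.
lia.
Qed.

Lemma Fsystem_separated (F : Ffamily) (c c' : colour) tau kappa T K x :
  is_Fsystem F -> c <> c' -> valid_idx tau kappa -> valid_idx T K ->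
  kappa + K <= maxn tau T -> F c tau kappa x -> F c' T K x -> False.
Proof.
case=> _ _ F2 cc' v v' le Fx F'x.
case: c c' cc' Fx F'x => -[] // _ Fx F'x.
- exact: (F2 _ _ _ _ x v v' le).
- by apply: (F2 _ _ _ _ x v' v); rewrite 1?maxnC 1?addnC.
Qed.

Lemma Fsystem_low_avoids_high (F : Ffamily) (c c' : colour) tau kappa T K x :
  is_Fsystem F -> c <> c' -> valid_idx tau kappa -> valid_idx T K ->
  tau <= T -> kappa + K <= T -> F c tau kappa x -> ~ F c' T K x.
Proof.
move=> FS cc' v v' tauT le Fx F'x.
apply: (Fsystem_separated FS cc' v v' _ Fx F'x).
by rewrite (maxn_idPr tauT).
Qed.

Lemma Fup_avoids_high (F : Ffamily) (c c' : colour) s T K x :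
  is_Fsystem F -> c <> c' -> valid_idx T K -> s + K <= T ->
  Fup F c s x -> ~ F c' T K x.
Proof.
move=> FS cc' v' le [tau [kappa [k0 kt ts Fx]]].
apply: (Fsystem_low_avoids_high FS cc' _ v' _ _ Fx); rewrite /valid_idx; lia.
Qed.

Lemma Fup_mono (F : Ffamily) c s s' x : s <= s' -> Fup F c s x -> Fup F c s' x.
Proof.
move=> ss' [tau [kappa [k0 kt ts Fx]]]; exists tau, kappa; split=> //.
exact: leq_trans ss'.
Qed.

Lemma F_sub_Fup (F : Ffamily) c tau kappa x :
  valid_idx tau kappa -> F c tau kappa x -> Fup F c tau x.
Proof. by case/andP=> k0 kt Fx; exists tau, kappa; split. Qed.

Definition SZset (F : Ffamily) (t x : nat) : Prop :=
  Sset F t x \/ Zset F ((3 * t) %/ 2) t x.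

Section LevelThreeT.

Variable F : Ffamily.
Hypothesis FS : is_Fsystem F.
Variable t : nat.
Hypothesis t_gt0 : 0 < t.

Let vtop : valid_idx (3 * t) (2 * t).
Proof. by rewrite /valid_idx; lia. Qed.

Let vmid : valid_idx ((3 * t) %/ 2) t.
Proof. by rewrite /valid_idx t_gt0 leq_divRL //; lia. Qed.

Let mid_le_top : (3 * t) %/ 2 <= 3 * t.
Proof. exact: leq_div. Qed.

Lemma Zset_top_sub_Fup x : Zset F (3 * t) (2 * t) x -> Fup F cA (3 * t) x.
Proof. by case=> /(F_sub_Fup vtop). Qed.

Lemma SZset_sub_Fup x : SZset F t x -> Fup F cA (3 * t) x.
Proof.
have t_le_top : t <= 3 * t by lia.
by case=> [[/(Fup_mono t_le_top)] | [/(F_sub_Fup vmid)/(Fup_mono mid_le_top)]].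
Qed.

(* Axiom F2 applied at level (3t, 2t): X_t avoids F^c_{3t,2t} for both colours,
   since every element of X_t lies in some F^{c'}_{tau,kappa} with
   tau <= 3t and kappa <= t. *)
Lemma SZset_avoids_top c x : SZset F t x -> ~ F c (3 * t) (2 * t) x.
Proof.
have lowS c' : c' <> c -> Fup F c' t x -> ~ F c (3 * t) (2 * t) x.
  by move=> cc'; apply: (Fup_avoids_high FS cc' vtop); lia.
have lowZ c' : c' <> c -> F c' ((3 * t) %/ 2) t x -> ~ F c (3 * t) (2 * t) x.
  by move=> cc'; apply: (Fsystem_low_avoids_high FS cc' vmid vtop mid_le_top); lia.
by case: c lowS lowZ => lowS lowZ [[SA SB]|[ZA ZB]];
  [apply: (lowS cB) | apply: (lowZ cB) | apply: (lowS cA) | apply: (lowZ cA)].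
Qed.

Lemma Zset_count_bound (U : seq nat) :
  uniq U -> (forall c x, Fup F c (3 * t) x -> x \in U) ->
  count (decide (SZset F t)) U + 4 * t <=
  size U + count (decide (Zset F (3 * t) (2 * t))) U.
Proof.
move=> uU inU; case: (FS) => _ F1 _.
have topU c x : F c (3 * t) (2 * t) x -> x \in U by move/(F_sub_Fup vtop)/inU.
have countA := has_at_least_count (F1 cA _ _ vtop) (topU cA).
have countB := has_at_least_count (F1 cB _ _ vtop) (topU cB).
have disj x : decide (SZset F t) x ->
    ~~ (decide (F cA (3 * t) (2 * t)) x || decide (F cB (3 * t) (2 * t)) x).
  move/decideP=> X; apply/norP; split; apply/decideP; exact: SZset_avoids_top.
have eZ : count (predI (decide (F cA (3 * t) (2 * t)))
                       (decide (F cB (3 * t) (2 * t)))) U =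
          count (decide (Zset F (3 * t) (2 * t))) U.
  by apply: eq_count => x /=; apply/andP/decideP => -[/decideP a /decideP b].
have := count_disjoint_union U disj; lia.
Qed.

End LevelThreeT.

Local Open Scope ring_scope.

Theorem lemma5 (K : realFieldType) (F : Ffamily) (R lambda : K) :
  is_Fsystem F ->
  (forall t : nat, (0 < t)%N ->
     exists n : nat, card_is (fun x => Fup F cA t x \/ Fup F cB t x) n /\
                     n%:R <= R * t%:R + lambda) ->
  forall t : nat, (0 < t)%N -> ~~ odd t ->
    exists nZ nSZ : nat,
      [/\ card_is (Zset F (3 * t) (2 * t)) nZ,
          card_is (fun x => Sset F t x \/ Zset F ((3 * t) %/ 2) t x) nSZ &
          nSZ%:R - (3%:R * R - 4%:R) * t%:R - lambda <= nZ%:R].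
Proof.
move=> FS HU t t0 _.
have [n [[U [uU sizeU memU]] HnR]] := HU (3 * t)%N ltac:(lia).
have inU c x : Fup F c (3 * t) x -> x \in U.
  by move=> Fx; apply/memU; case: c Fx; [left|right].
exists (count (decide (Zset F (3 * t) (2 * t))) U), (count (decide (SZset F t)) U).
split.
- by apply: card_is_count => // x /(Zset_top_sub_Fup t0)/inU.
- by apply: card_is_count => // x /(SZset_sub_Fup t0)/inU.
have := Zset_count_bound FS t0 uU inU; rewrite sizeU -(ler_nat K) !natrD.
move: HnR; rewrite natrM; lra.
Qed.
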